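(* Let $n\ge1$ be an integer and consider the hypersurface $X_n=\{w^2+x^2+y^2+z^{n+1}=0\}\subset\mathbb{C}^4$ with weights $\zeta=\left(\frac{2n+2}{n+3},\frac{2n+2}{n+3},\frac{2n+2}{n+3},\frac{4}{n+3}\right)$ on $(w,x,y,z)$. Then $a_0(0)=a_1(0)=\frac{(n+3)^3}{8(n+1)^2}$. For the test symmetry $\eta=(0,0,0,1)$ the Futaki invariant is $F=\frac{(3-n)(n+3)^3}{32(n+1)^2}$, and for $\eta=(1,0,0,0)$ it is $F=\frac{n(n+3)^3}{8(n+1)^3}$. Consequently, for $n\ge4$ there is a test symmetry with $F<0$, so $X_n$ is not K-semistable; and for $n=3$, $\eta=(0,0,0,1)$ has $F=0$ while $c_0-b_0^2/a_0=\frac{27}{128}\neq0$, so $X_3$ is not K-stable.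
   Context: Convention: for a weighted homogeneous hypersurface $\{f=0\}\subset\mathbb{C}^{N}$ with variable weights $k_i>0$ and $f$ of weighted degree $d$, and a test symmetry $\eta$ with charges $v_i$ for which the terms of $f$ of lowest $\eta$-weight have $\eta$-weight $0$, the perturbed Hilbert series is $H_\epsilon(t)=(1-t^{d})/\prod_i(1-t^{k_i+\epsilon v_i})$. With $n=N-1$ and $H_\epsilon(e^{-s})=a_0(\epsilon)s^{-n}+a_1(\epsilon)s^{-(n-1)}+O(s^{-(n-2)})$, the Futaki invariant is $F=n\,a_1'(0)-(n-1)a_0'(0)$, and $b_0=-a_0'(0)/n$, $c_0=a_0''(0)/(n(n+1))$, $a_0=a_0(0)$. A ring is K-semistable if $F\ge0$ for every test symmetry, and K-stable if moreover $F=0$ only when the norm $c_0-b_0^2/a_0$ (for non-trivial test configurations) vanishes. *)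

From HB Require Import structures.
From mathcomp Require Import all_boot all_order all_algebra.
From mathcomp Require Import all_classical all_reals all_analysis.
Set Implicit Arguments. Unset Strict Implicit. Unset Printing Implicit Defensive.
Import Order.TTheory GRing.Theory Num.Theory.
Import numFieldNormedType.Exports.
Local Open Scope classical_set_scope.
Local Open Scope ring_scope.

Section Defs.
Variable R : realType.
Variable N : nat.
(* Ambient space C^(N.+1), coordinates indexed by 'I_N.+1; the hypersurface
   has complex dimension n = N. *)

(* a monomial = exponent vector; a polynomial f is given by the list of its
   monomials with nonzero coefficient *)
Definition monomial := 'I_N.+1 -> nat.

Definition mweight (k : 'I_N.+1 -> R) (m : monomial) : R :=
  \sum_(i < N.+1) (m i)%:R * k i.

Definition whomog (k : 'I_N.+1 -> R) (f : seq monomial) (d : R) : Prop :=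
  f != [::] /\ forall m, m \in f -> mweight k m = d.

Definition test_symmetry (f : seq monomial) (v : 'I_N.+1 -> R) : Prop :=
  (exists2 m, m \in f & mweight v m = 0) /\ (forall m, m \in f -> 0 <= mweight v m).

Definition hilb (k v : 'I_N.+1 -> R) (d eps t : R) : R :=
  (1 - t `^ d) / \prod_(i < N.+1) (1 - t `^ (k i + eps * v i)).

(* coefficients of H_eps(e^{-s}) = a0 s^{-n} + a1 s^{-(n-1)} + O(s^{-(n-2)}), n = N *)
Definition a0 (k v : 'I_N.+1 -> R) (d eps : R) : R :=
  lim (s ^+ N * hilb k v d eps (expR (- s)) @[s --> 0^'+]).

Definition a1 (k v : 'I_N.+1 -> R) (d eps : R) : R :=
  lim (s ^+ N.-1 * (hilb k v d eps (expR (- s)) - a0 k v d eps / s ^+ N)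
       @[s --> 0^'+]).

Definition futaki (k v : 'I_N.+1 -> R) (d : R) : R :=
  N%:R * (derive1 (fun e => a1 k v d e) 0)
  - (N%:R - 1) * (derive1 (fun e => a0 k v d e) 0).

Definition b0 (k v : 'I_N.+1 -> R) (d : R) : R :=
  - (derive1 (fun e => a0 k v d e) 0) / N%:R.

Definition c0 (k v : 'I_N.+1 -> R) (d : R) : R :=
  derive1n 2 (fun e => a0 k v d e) 0 / (N%:R * (N%:R + 1)).

Definition tnorm (k v : 'I_N.+1 -> R) (d : R) : R :=
  c0 k v d - (b0 k v d) ^+ 2 / a0 k v d 0.

Definition Ksemistable (k : 'I_N.+1 -> R) (f : seq monomial) (d : R) : Prop :=
  forall v, test_symmetry f v -> 0 <= futaki k v d.

Definition Kstable (k : 'I_N.+1 -> R) (f : seq monomial) (d : R) : Prop :=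
  Ksemistable k f d /\
  forall v, test_symmetry f v -> futaki k v d = 0 -> tnorm k v d = 0.

End Defs.

(* The example X_n = {w^2 + x^2 + y^2 + z^(n+1) = 0} in C^4, coordinates
   (w,x,y,z) = indices 0,1,2,3. *)
Definition Xmon (n : nat) : seq (monomial 3) :=
  [:: (fun i : 'I_4 => if val i == 0%N then 2%N else 0%N);
      (fun i : 'I_4 => if val i == 1%N then 2%N else 0%N);
      (fun i : 'I_4 => if val i == 2%N then 2%N else 0%N);
      (fun i : 'I_4 => if val i == 3%N then n.+1 else 0%N)].

Definition zeta (R : realType) (n : nat) : 'I_4 -> R :=
  fun i => if val i == 3%N then 4 / (n%:R + 3) else (2 * n%:R + 2) / (n%:R + 3).

Definition eta_z (R : realType) : 'I_4 -> R := fun i => if val i == 3%N then 1 else 0.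
Definition eta_w (R : realType) : 'I_4 -> R := fun i => if val i == 0%N then 1 else 0.

From mathcomp Require Import all_boot all_order all_algebra.
From mathcomp Require Import all_classical all_reals all_analysis.
From mathcomp Require Import ring lra.
Import Order.TTheory GRing.Theory Num.Theory.
Import numFieldNormedType.Exports.
Local Open Scope classical_set_scope.
Local Open Scope ring_scope.

(* Substituting t = e^(-s), every factor 1 - t^c of the Hilbert series becomes
   s * sfactor c s with sfactor c s = (1 - e^(-cs))/s = c - c^2 s/2 + o(s).
   Hence s^N H_eps(e^(-s)) = sfactor d s / prod_i sfactor (k_i + eps v_i) s,
   and expanding to first order in s gives closed forms for all weights:
     a0(eps) = d / prod w_i,   a1(eps) = a0(eps) (sum w_i - d) / 2,
   with w_i = k_i + eps v_i.  For a test symmetry charging one coordinate j,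
   a0 and a1 are rational functions D/(k_j + eps) (times an affine factor),
   whose derivatives at 0 yield general formulas for the Futaki invariant and
   for the norm c0 - b0^2/a0.  The theorem follows by specialising these
   formulas to the weights zeta of X_n, the coordinates z (j = 3) and w (j = 0). *)

Section Expansion.
Context {R : realType}.

Lemma is_derive_continuous_right {f : R -> R} {x df : R} :
  is_derive x 1 f df -> f y @[y --> x^'+] --> f x.
Proof.
move=> fdf; apply: cvg_at_right_filter; apply: differentiable_continuous.
by apply/derivable1_diffP; exact: ex_derive.
Qed.

Lemma lhopital_right0 (f df g dg : R -> R) (l : R) :
  (forall x : R, is_derive x 1 f (df x)) -> (forall x : R, is_derive x 1 g (dg x)) ->
  f 0 = 0 -> g 0 = 0 -> (forall x : R, 0 < x -> dg x != 0) ->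
  df x / dg x @[x --> 0^'+] --> l -> f x / g x @[x --> 0^'+] --> l.
Proof.
move=> fdf gdg f0 g0 dg0 dfgl.
apply: (@lhopital_at_right R f df g dg 0 1 l ltr01) => //.
- by rewrite -[X in _ --> X]f0; exact: is_derive_continuous_right (fdf 0).
- by rewrite -[X in _ --> X]g0; exact: is_derive_continuous_right (gdg 0).
- by move=> x; rewrite in_itv /= => /andP[x0 _]; exact: dg0.
Qed.

(* The factor 1 - t^c of the Hilbert series at t = e^(-s), divided by s. *)
Definition sfactor (c s : R) : R := (1 - expR (- s * c)) / s.

Lemma is_derive_expNM (c x : R) :
  is_derive x 1 (fun s : R => expR (- s * c)) (- c * expR (- x * c)).
Proof. by apply: is_derive_eq; rewrite /GRing.scale /=; ring. Qed.

Lemma sfactor_lim (c : R) : sfactor c s @[s --> 0^'+] --> c.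
Proof.
apply: (@lhopital_right0 (fun s => 1 - expR (- s * c)) (fun s => c * expR (- s * c))
                          id (fun=> 1)).
- by move=> x; apply: is_derive_eq; rewrite /GRing.scale /=; ring.
- by rewrite oppr0 mul0r expR0 subrr.
- by [].
- by move=> *; exact: oner_neq0.
have := is_derive_continuous_right (is_derive_expNM c 0).
rewrite oppr0 mul0r expR0 => e1.
rewrite -[c in _ --> c]mulr1; under eq_fun do rewrite divr1.
by apply: cvgM => //; exact: cvg_cst.
Qed.

Lemma sfactor_slope (c : R) : (sfactor c s - c) / s @[s --> 0^'+] --> - c ^+ 2 / 2.
Proof.
(* after one application of l'Hopital to (1 - e^(-sc) - sc) / s^2 the ratio of
   derivatives is - (c/2) * sfactor c s *)
have dlim : (c * expR (- s * c) - c) / (2 * s) @[s --> 0^'+] --> - c ^+ 2 / 2.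
  rewrite (_ : - c ^+ 2 / 2 = - c / 2 * c); last by ring.
  apply: cvg_trans (cvgM (cvg_cst (- c / 2)) (sfactor_lim c)).
  apply: near_eq_cvg; near=> s.
  have s0 : s != 0 by apply: lt0r_neq0; near: s; exact: nbhs_right_gt.
  by rewrite /sfactor /=; set e := expR _; field.
have lh : (1 - expR (- s * c) - s * c) / s ^+ 2 @[s --> 0^'+] --> - c ^+ 2 / 2.
  apply: (@lhopital_right0 _ (fun s => c * expR (- s * c) - c) _ (fun s => 2 * s)) => //.
  - by move=> x; apply: is_derive_eq; rewrite /GRing.scale /=; ring.
  - by move=> x; apply: is_derive_eq; rewrite /GRing.scale /=; ring.
  - by rewrite oppr0 !mul0r expR0 subrr subr0.
  - by rewrite expr0n.
  - by move=> x x0; rewrite mulf_neq0 ?gt_eqF.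
apply: cvg_trans lh; apply: near_eq_cvg; near=> s.
have s0 : s != 0 by apply: lt0r_neq0; near: s; exact: nbhs_right_gt.
by rewrite /sfactor; set e := expR _; field.
Unshelve. all: by end_near.
Qed.

Lemma sfactor_prod_lim {n : nat} (K : 'I_n -> R) :
  \prod_(i < n) sfactor (K i) s @[s --> 0^'+] --> \prod_(i < n) K i.
Proof. by apply: (cvg_big mul_continuous) => // i _; exact: sfactor_lim. Qed.

Lemma sfactor_prod_slope {n : nat} (K : 'I_n -> R) :
  (\prod_(i < n) sfactor (K i) s - \prod_(i < n) K i) / s @[s --> 0^'+] -->
    - (\prod_(i < n) K i) * (\sum_(i < n) K i) / 2.
Proof.
elim: n K => [|n IH] K.
  under eq_cvg do rewrite !big_ord0 subrr mul0r.
  by rewrite !big_ord0 mulr0 mul0r; exact: cvg_cst.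
pose P s := \prod_(i < n) sfactor (K (widen_ord (leqnSn n) i)) s.
pose p := \prod_(i < n) K (widen_ord (leqnSn n) i).
pose S := \sum_(i < n) K (widen_ord (leqnSn n) i).
pose c := K ord_max.
have split_slope s : (\prod_(i < n.+1) sfactor (K i) s - \prod_(i < n.+1) K i) / s =
    (P s - p) / s * sfactor c s + p * ((sfactor c s - c) / s).
  by rewrite !big_ord_recr /= /P /p /c; ring.
under eq_cvg do rewrite split_slope.
rewrite big_ord_recr big_ord_recr /= -/p -/S -/c.
rewrite (_ : - (p * c) * (S + c) / 2 = - p * S / 2 * c + p * (- c ^+ 2 / 2)); last by ring.
apply: cvgD; apply: cvgM.
- exact: IH.
- exact: sfactor_lim.
- exact: cvg_cst.
- exact: sfactor_slope.
Qed.
End Expansion.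

Section HilbertCoefficients.
Context {R : realType} {N : nat}.
Variables (k v : 'I_N.+1 -> R) (d eps : R).

Let w i := k i + eps * v i.

Definition a0_val : R := d / \prod_(i < N.+1) w i.

Definition a1_val : R := a0_val * (\sum_(i < N.+1) w i - d) / 2.

Lemma one_sub_powR (s x : R) : s != 0 -> 1 - expR (- s) `^ x = s * sfactor x s.
Proof. by move=> s0; rewrite -expRM /sfactor mulrCA mulfV // mulr1. Qed.

Lemma hilb_sfactor (s : R) : s != 0 ->
  s ^+ N * hilb k v d eps (expR (- s)) = sfactor d s / \prod_(i < N.+1) sfactor (w i) s.
Proof.
move=> s0; rewrite /hilb one_sub_powR //.
under eq_bigr do rewrite one_sub_powR //.
rewrite big_split /= prodr_const card_ord exprS !invfM.
set Q := (\prod_(i < N.+1) _)^-1; have sN : s ^+ N != 0 by rewrite expf_neq0.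
by field; rewrite s0 sN.
Qed.

(* If some perturbed weight vanishes the series is 0 (division by 0). *)
Lemma hilb_degenerate (s : R) : \prod_(i < N.+1) w i = 0 -> hilb k v d eps (expR (- s)) = 0.
Proof.
move=> /eqP; rewrite prodf_seq_eq0 => /hasP[i _ /= /eqP]; rewrite /w => wi0.
by rewrite /hilb (bigD1 i) //= wi0 powRr0 subrr mul0r invr0 mulr0.
Qed.

Lemma a0E : a0 k v d eps = a0_val.
Proof.
rewrite /a0 /a0_val; set P := \prod_(i < N.+1) w i.
have [P0|P0] := eqVneq P 0.
  have -> : (fun s => s ^+ N * hilb k v d eps (expR (- s))) = fun=> 0.
    by apply/funext => s; rewrite hilb_degenerate // mulr0.
  by rewrite lim_cst // P0 invr0 mulr0.
have lim_closed : sfactor d s / \prod_(i < N.+1) sfactor (w i) s @[s --> 0^'+] --> d / P.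
  by apply: cvgM; [exact: sfactor_lim | apply: cvgV; [exact: P0 | exact: sfactor_prod_lim]].
apply: cvg_lim => //; apply: cvg_trans lim_closed.
apply: near_eq_cvg; near=> s.
by rewrite hilb_sfactor // gt_eqF //; near: s; exact: nbhs_right_gt.
Unshelve. all: by end_near.
Qed.
End HilbertCoefficients.

Section SubleadingCoefficient.
Context {R : realType} {M : nat}.
Variables (k v : 'I_M.+2 -> R) (d eps : R).

Let w i := k i + eps * v i.

(* a1 comes from the first-order terms; it needs dimension N = M.+1 >= 1 so
   that s^(N-1) * s^(-N) = s^(-1). *)
Lemma a1E : a1 k v d eps = a1_val k v d eps.
Proof.
rewrite /a1 a0E /a1_val /a0_val -/w.
set P := \prod_(i < M.+2) w i; set S := \sum_(i < M.+2) w i.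
have [P0|P0] := eqVneq P 0.
  have -> : (fun s => s ^+ M.+1.-1 * (hilb k v d eps (expR (- s)) - d / P / s ^+ M.+1)) = fun=> 0.
    by apply/funext => s; rewrite hilb_degenerate // P0 invr0 mulr0 !mul0r subrr mulr0.
  by rewrite lim_cst // P0 invr0 !mulr0 !mul0r.
pose Q s := \prod_(i < M.+2) sfactor (w i) s.
have lim_closed : ((sfactor d s - d) / s - d / P * ((Q s - P) / s)) / Q s @[s --> 0^'+] -->
                  (- d ^+ 2 / 2 - d / P * (- P * S / 2)) / P.
  apply: cvgM; last by apply: cvgV; [exact: P0 | exact: sfactor_prod_lim].
  apply: cvgB; first exact: sfactor_slope.
  by apply: cvgM; [exact: cvg_cst | exact: sfactor_prod_slope].
apply: cvg_lim => //; rewrite (_ : d / P * (S - d) / 2 = (- d ^+ 2 / 2 - d / P * (- P * S / 2)) / P);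
  last by field.
apply: cvg_trans lim_closed; apply: near_eq_cvg; near=> s.
have s0 : s != 0 by apply: lt0r_neq0; near: s; exact: nbhs_right_gt.
have Q0 : Q s != 0 by near: s; exact: (cvgr_neq0 P (sfactor_prod_lim w) P0).
have sM : s ^+ M.+1 != 0 by rewrite expf_neq0.
have -> : hilb k v d eps (expR (- s)) = sfactor d s / Q s / s ^+ M.+1.
  by apply: (mulfI sM); rewrite hilb_sfactor // mulrCA mulfV // mulr1.
rewrite /= exprS; set X := sfactor d s; set Y := Q s.
have sM' : s ^+ M != 0 by rewrite expf_neq0.
by field; rewrite Q0 P0 sM' s0.
Unshelve. all: by end_near.
Qed.
End SubleadingCoefficient.

Section RecipDerivatives.
Context {R : realType}.
Variables (D c : R).
Hypothesis c0 : c != 0.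

Lemma derive1_is_derive {f : R -> R} {x df : R} : is_derive x 1 f df -> derive1 f x = df.
Proof. by move=> fdf; rewrite derive1E derive_val. Qed.

Lemma shift_neq0_near : \forall e \near (0 : R), c + e != 0.
Proof.
have shift_cont : c + e @[e --> (0 : R)] --> c.
  by rewrite -[c in _ --> c]addr0; apply: cvgD; [exact: cvg_cst | exact: cvg_id].
exact: (cvgr_neq0 c shift_cont c0).
Qed.

Lemma is_derive_recip {x : R} : c + x != 0 ->
  is_derive x 1 (fun e => D / (c + e)) (- D / (c + x) ^+ 2).
Proof. by move=> cx0; apply: is_derive_eq; rewrite /GRing.scale /=; field. Qed.

(* Derivatives at 0 of D/(c + e) and of D/(c + e) * (L + e)/2, which is the
   shape of a0 and a1 along a coordinate test symmetry. *)
Lemma derive1_recip : derive1 (fun e => D / (c + e)) 0 = - D / c ^+ 2.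
Proof.
have cx0 : c + 0 != 0 by rewrite addr0.
by rewrite (derive1_is_derive (is_derive_recip cx0)) addr0.
Qed.

Lemma derive1_recip_affine (L : R) :
  derive1 (fun e => D / (c + e) * (L + e) / 2) 0 = D * (c - L) / (2 * c ^+ 2).
Proof.
have cx0 : c + 0 != 0 by rewrite addr0.
by apply: derive1_is_derive; apply: is_derive_eq; rewrite /GRing.scale /= addr0; field.
Qed.

Lemma derive2_recip : derive1n 2 (fun e => D / (c + e)) 0 = 2 * D / c ^+ 3.
Proof.
rewrite derive1nS derive1n1 derive1E.
rewrite (@near_eq_derive _ _ _ _ (fun e => - D / (c + e) ^+ 2)); last first.
  near=> e; have ce0 : c + e != 0 by near: e; exact: shift_neq0_near.
  by rewrite (derive1_is_derive (is_derive_recip ce0)).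
have cx0 : (c + 0) ^+ 2 != 0 by rewrite addr0 expf_neq0.
rewrite -derive1E; apply: derive1_is_derive.
by apply: is_derive_eq; rewrite /GRing.scale /= addr0; field.
Unshelve. all: by end_near.
Qed.
End RecipDerivatives.

Definition coord_symmetry {R : realType} {N : nat} (j : 'I_N.+1) : 'I_N.+1 -> R :=
  fun i => if i == j then 1 else 0.

Lemma mweight_coord {R : realType} {N : nat} (j : 'I_N.+1) (m : monomial N) :
  mweight (coord_symmetry j) m = (m j)%:R :> R.
Proof.
rewrite /mweight (bigD1 j) //= /coord_symmetry eqxx mulr1 big1 ?addr0 //.
by move=> i /negbTE ->; rewrite mulr0.
Qed.

Lemma test_symmetry_coord {R : realType} {N : nat} (f : seq (monomial N)) (j : 'I_N.+1) :
  (exists2 m, m \in f & m j = 0%N) -> test_symmetry f (coord_symmetry j : _ -> R).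
Proof.
move=> [m mf mj0]; split; first by exists m; rewrite // mweight_coord mj0.
by move=> m' _; rewrite mweight_coord.
Qed.

Section CoordinateSymmetry.
Context {R : realType} {M : nat}.
Variables (k : 'I_M.+2 -> R) (d : R) (j : 'I_M.+2).
Hypothesis kj0 : k j != 0.

(* Along coord_symmetry j only the weight k j is perturbed. *)
Let D := d / \prod_(i < M.+2 | i != j) k i.
Let S := \sum_(i < M.+2) k i.
Let v : 'I_M.+2 -> R := coord_symmetry j.

Lemma a0_coord (e : R) : a0 k v d e = D / (k j + e).
Proof.
rewrite a0E /a0_val (bigD1 j) //= /v /coord_symmetry eqxx mulr1.
rewrite (eq_bigr k) => [|i /negbTE ->]; last by rewrite mulr0 addr0.
by rewrite /D invfM; ring.
Qed.

Lemma a0_coord0 : a0 k (fun=> 0) d 0 = D / k j.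
Proof.
rewrite a0E /a0_val (bigD1 j) //= mulr0 addr0.
by rewrite (eq_bigr k) => [|i _]; rewrite ?mulr0 ?addr0 // /D invfM; ring.
Qed.

Lemma a1_coord (e : R) : a1 k v d e = D / (k j + e) * ((S - d) + e) / 2.
Proof.
rewrite a1E /a1_val -a0E a0_coord big_split /=; congr (_ * _ / _).
rewrite -/S [\sum_(i < M.+2) e * v i](bigD1 j) //= /v /coord_symmetry eqxx mulr1 big1 ?addr0;
  first by ring.
by move=> i /negbTE ->; rewrite mulr0.
Qed.

Lemma futaki_coord :
  futaki k v d = a0 k (fun=> 0) d 0 / k j * (M.+1%:R * (d + k j - S) / 2 + (M.+1%:R - 1)).
Proof.
rewrite /futaki a0_coord0 (funext a0_coord) (funext a1_coord).
by rewrite derive1_recip_affine // derive1_recip //; field.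
Qed.

Lemma tnorm_coord :
  tnorm k v d = a0 k (fun=> 0) d 0 / k j ^+ 2 * (M.+1%:R - 1) / (M.+1%:R ^+ 2 * (M.+1%:R + 1)).
Proof.
rewrite /tnorm /c0 /b0 a0_coord0 (funext a0_coord) derive1_recip // derive2_recip // addr0.
have [->|D0] := eqVneq D 0; first by rewrite !(mulr0, mul0r, oppr0, invr0, subr0).
by field; rewrite D0 kj0 !nat1r natr1 !pnatr_eq0.
Qed.
End CoordinateSymmetry.

Section Example.
Context {R : realType}.
Variables (n : nat) (d : R).
Hypothesis hd : whomog (zeta R n) (Xmon n) d.

Let n_ge0 : 0 <= n%:R :> R. Proof. exact: ler0n. Qed.

Lemma zeta_neq0 (i : 'I_4) : zeta R n i != 0.
Proof. by rewrite /zeta; case: ifP => _; apply/lt0r_neq0/divr_gt0; have := n_ge0; lra. Qed.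

(* Weighted homogeneity of w^2 forces d = 2 zeta_w. *)
Lemma Xn_degree : d = 4 * (n%:R + 1) / (n%:R + 3).
Proof.
rewrite -(hd.2 _ (mem_head _ _)) /mweight !big_ord_recl big_ord0 /zeta /=.
by field; rewrite !lt0r_neq0 //; have := n_ge0; lra.
Qed.

Lemma Xn_weight_sum : \sum_(i < 4) zeta R n i = (6 * n%:R + 10) / (n%:R + 3).
Proof.
rewrite !big_ord_recl big_ord0 /zeta /=.
by field; rewrite !lt0r_neq0 //; have := n_ge0; lra.
Qed.

Lemma Xn_a0 : a0 (zeta R n) (fun=> 0) d 0 = (n%:R + 3) ^+ 3 / (8 * (n%:R + 1) ^+ 2).
Proof.
rewrite a0E /a0_val !big_ord_recl big_ord0 /zeta /= Xn_degree.
by field; rewrite !lt0r_neq0 //; have := n_ge0; lra.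
Qed.

Lemma Xn_a1 : a1 (zeta R n) (fun=> 0) d 0 = (n%:R + 3) ^+ 3 / (8 * (n%:R + 1) ^+ 2).
Proof.
rewrite a1E /a1_val -a0E Xn_a0.
under eq_bigr do rewrite mulr0 addr0.
rewrite Xn_weight_sum Xn_degree.
by field; rewrite !lt0r_neq0 //; have := n_ge0; lra.
Qed.

Lemma eta_z_coord : eta_z R = coord_symmetry ord_max.
Proof. by apply/funext => i; rewrite /coord_symmetry -val_eqE. Qed.

Lemma eta_w_coord : eta_w R = coord_symmetry ord0.
Proof. by apply/funext => i; rewrite /coord_symmetry -val_eqE. Qed.

Lemma Xn_futaki_z :
  futaki (zeta R n) (eta_z R) d = (3 - n%:R) * (n%:R + 3) ^+ 3 / (32 * (n%:R + 1) ^+ 2).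
Proof.
rewrite eta_z_coord futaki_coord ?zeta_neq0 // Xn_a0 Xn_weight_sum Xn_degree /zeta /=.
by field; rewrite !lt0r_neq0 //; have := n_ge0; lra.
Qed.

Lemma Xn_futaki_w :
  futaki (zeta R n) (eta_w R) d = n%:R * (n%:R + 3) ^+ 3 / (8 * (n%:R + 1) ^+ 3).
Proof.
rewrite eta_w_coord futaki_coord ?zeta_neq0 // Xn_a0 Xn_weight_sum Xn_degree /zeta /=.
by field; rewrite !lt0r_neq0 //; have := n_ge0; lra.
Qed.

Lemma Xn_tnorm_z :
  tnorm (zeta R n) (eta_z R) d = (n%:R + 3) ^+ 5 / (2304 * (n%:R + 1) ^+ 2).
Proof.
rewrite eta_z_coord tnorm_coord ?zeta_neq0 // Xn_a0 /zeta /=.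
by field; rewrite !lt0r_neq0 //; have := n_ge0; lra.
Qed.

Lemma Xn_test_z : test_symmetry (Xmon n) (eta_z R).
Proof.
rewrite eta_z_coord; apply: test_symmetry_coord.
by exists (nth (fun=> 0%N) (Xmon n) 0); rewrite ?mem_nth.
Qed.

Lemma Xn_test_w : test_symmetry (Xmon n) (eta_w R).
Proof.
rewrite eta_w_coord; apply: test_symmetry_coord.
by exists (nth (fun=> 0%N) (Xmon n) 1); rewrite ?mem_nth.
Qed.
End Example.

Theorem mainTheorem3 (R : realType) (n : nat) (hn : (1 <= n)%N) (d : R)
    (hd : whomog (zeta R n) (Xmon n) d) :
  let nr : R := n%:R in
  a0 (zeta R n) (fun=> 0) d 0 = (nr + 3) ^+ 3 / (8 * (nr + 1) ^+ 2) /\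
  a1 (zeta R n) (fun=> 0) d 0 = (nr + 3) ^+ 3 / (8 * (nr + 1) ^+ 2) /\
  test_symmetry (Xmon n) (eta_z R) /\
  futaki (zeta R n) (eta_z R) d = (3 - nr) * (nr + 3) ^+ 3 / (32 * (nr + 1) ^+ 2) /\
  test_symmetry (Xmon n) (eta_w R) /\
  futaki (zeta R n) (eta_w R) d = nr * (nr + 3) ^+ 3 / (8 * (nr + 1) ^+ 3) /\
  ((4 <= n)%N ->
     (exists v, test_symmetry (Xmon n) v /\ futaki (zeta R n) v d < 0) /\
     ~ Ksemistable (zeta R n) (Xmon n) d) /\
  (n = 3%N ->
     futaki (zeta R n) (eta_z R) d = 0 /\
     tnorm (zeta R n) (eta_z R) d = 27 / 128 /\
     ~ Kstable (zeta R n) (Xmon n) d).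
Proof.
move=> nr; have Fz := Xn_futaki_z n d hd; have tz := @Xn_test_z R n.
(* for n >= 4 the factor 3 - n makes the Futaki invariant of eta_z negative *)
have Fz_neg : (4 <= n)%N -> futaki (zeta R n) (eta_z R) d < 0.
  move=> n4; have n4R : 4 <= nr by rewrite /nr (ler_nat R 4 n).
  have pos : 0 < (nr + 3) ^+ 3 / (32 * (nr + 1) ^+ 2).
    by apply: divr_gt0; rewrite ?mulr_gt0 ?exprn_gt0 //; lra.
  by rewrite Fz -mulrA pmulr_llt0 //; lra.
split; first exact: Xn_a0.
split; first exact: Xn_a1.
split; first exact: tz.
split; first exact: Fz.
split; first exact: Xn_test_w.
split; first exact: Xn_futaki_w.
split.
  move=> n4; split; first by exists (eta_z R); split; [exact: tz | exact: Fz_neg].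
  by move=> Kss; have := Kss _ tz; have := Fz_neg n4; lra.
move=> n3; have F0 : futaki (zeta R n) (eta_z R) d = 0 by rewrite Fz /nr n3 subrr !mul0r.
have T : tnorm (zeta R n) (eta_z R) d = 27 / 128 by rewrite Xn_tnorm_z // n3; field.
do 2 (split; first by []).
by move=> [_ Kst]; have := Kst _ tz F0; rewrite T; lra.
Qed.
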